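(* Let $\mathbb{K}$ be a field of characteristic zero containing all complex roots of unity, $q$ transcendental over $\mathbb{K}$, $\mathbb{W}=\mathbb{K}(q)[M]\langle L\rangle$ the first $q$-Weyl algebra and $\mathbb{O}=\mathbb{K}(q,M)\langle L\rangle$. Fix a nonzero $P\in\mathbb{W}$ and a complex $m$-th root of unity $\omega$, and let $\tau_\omega(P)$ be defined as in the context. Then $\tau_\omega(P)\in\mathbb{K}(q)[M^m]\langle L\rangle$ and $S(P)\subseteq S(\tau_\omega(P))$.
   Context: In $\mathbb{W}$ and $\mathbb{O}$ the relation $LM=qML$ holds ($L$ acts on sequences by $Lf_n=f_{n+1}$, $M$ by $Mf_n=q^nf_n$). The operator $\tau_\omega(P)$ is the annihilator of the twisted sequence produced from $P$ as follows: take a nonzero element $A$ of minimal order in $L$ of the left ideal $\mathbb{O}P\cap\mathbb{K}(q,M^m)\langle L\rangle$ (i.e. an element of $\mathbb{O}P$ in which $M$ occurs only with exponents divisible by $m$), clear denominators so that $A=\sum_j c_j(q,M)L^j$ with polynomial coefficients in $M^m$ that are content-free, $\gcd(c_0,\dots,c_d)=1$, and then substitute $q\to\omega q$; if $Pf_n(q)=0$ then $\tau_\omega(P)f_n(\omega q)=0$. Newton polygon: for $P\in\mathbb{W}$ written as a sum of monomials $M^bL^a$ with coefficients in $\mathbb{K}(q)$, $N(P)$ is the convex hull in $\mathbb{R}^2$ of the exponent pairs $(a,b)$ occurring. $LN(P)$ is the lower convex hull of $N(P)$, consisting of finitely many non-vertical line segments and two vertical rays; $S(P)$ denotes the set of slopes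 of the non-vertical segments of $LN(P)$. *)

From HB Require Import structures.
From mathcomp Require Import all_boot all_order all_algebra.
Set Implicit Arguments. Unset Strict Implicit. Unset Printing Implicit Defensive.
Import Order.TTheory GRing.Theory Num.Theory.
Local Open Scope ring_scope.

(* Kq     := K(q) = {fraction {poly K}}, q the (transcendental) indeterminate.
   KqM    := K(q,M) = {fraction {poly Kq}}.
   W  = K(q)[M]<L> : elements represented as  P : {poly {poly Kq}}, P = sum_a P`_a(M) L^a
        (so the coefficient of the monomial M^b L^a is (P`_a)`_b).
   O  = K(q,M)<L>  : elements represented as  A : {poly KqM}, A = sum_a A`_a L^a,
        with the skew product  L c(M) = c(qM) L  (omul below). *)

Section Defs.
Variable K : fieldType.

Definition Kq := {fraction {poly K}}.
Definition KqM := {fraction {poly Kq}}.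

Definition fnum (R : idomainType) (f : {fraction R}) : R := (frac (repr f)).1.
Definition fden (R : idomainType) (f : {fraction R}) : R := (frac (repr f)).2.

Definition qK : Kq := tofrac ('X : {poly K}).

Definition sigma_pow (i : nat) (f : KqM) : KqM :=
  let s := (qK ^+ i) *: ('X : {poly Kq}) in
  tofrac (fnum f \Po s) / tofrac (fden f \Po s).

Definition omul (A B : {poly KqM}) : {poly KqM} :=
  \sum_(i < size A) \sum_(j < size B) (A`_i * sigma_pow i B`_j) *: 'X^(i + j).

Definition embedW (P : {poly {poly Kq}}) : {poly KqM} :=
  map_poly (fun c : {poly Kq} => tofrac c) P.

Definition in_left_ideal (P : {poly {poly Kq}}) (A : {poly KqM}) : Prop :=
  exists B : {poly KqM}, A = omul B (embedW P).

Definition polyMm (m : nat) (p : {poly Kq}) : Prop :=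
  forall i : nat, ~~ (m %| i)%N -> p`_i = 0.

Definition fracMm (m : nat) (f : KqM) : Prop :=
  exists n d : {poly Kq}, [/\ d != 0, polyMm m n, polyMm m d & f = tofrac n / tofrac d].

Definition opMm (m : nat) (A : {poly KqM}) : Prop := forall j : nat, fracMm m A`_j.

Definition WopMm (m : nat) (A : {poly {poly Kq}}) : Prop := forall j : nat, polyMm m A`_j.

Definition content_free (A : {poly {poly Kq}}) : Prop :=
  forall g : {poly Kq}, (forall j : nat, g %| A`_j) -> (size g <= 1)%N.

Definition subst_q (w : K) (f : Kq) : Kq :=
  let s := w *: ('X : {poly K}) in
  tofrac (fnum f \Po s) / tofrac (fden f \Po s).

Definition subst_q_op (w : K) (A : {poly {poly Kq}}) : {poly {poly Kq}} :=
  map_poly (map_poly (subst_q w)) A.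

Definition is_tau (m : nat) (w : K) (P T : {poly {poly Kq}}) : Prop :=
  exists (A : {poly KqM}) (u : KqM) (A' : {poly {poly Kq}}),
    [/\ A != 0, in_left_ideal P A, opMm m A &
        (forall B : {poly KqM}, B != 0 -> in_left_ideal P B -> opMm m B ->
           (size A <= size B)%N)] /\
    [/\ u != 0, embedW A' = u *: A, WopMm m A',
        content_free A' & T = subst_q_op w A'].

Definition newton_pt (P : {poly {poly Kq}}) (a b : nat) : bool := (P`_a)`_b != 0.

(* s is the slope of a non-vertical segment of the lower hull LN(P):
   there is a line of slope s through two distinct exponent pairs
   lying (weakly) below every exponent pair of P *)
Definition slope_of (P : {poly {poly Kq}}) (s : rat) : Prop :=
  exists a1 b1 a2 b2 : nat,
    [/\ (a1 < a2)%N, newton_pt P a1 b1, newton_pt P a2 b2,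
        b2%:Q = b1%:Q + s * (a2%:Q - a1%:Q) &
        forall a b : nat, newton_pt P a b -> b1%:Q + s * (a%:Q - a1%:Q) <= b%:Q].

End Defs.

From HB Require Import structures.
From mathcomp Require Import all_boot all_order all_algebra.
From mathcomp Require Import ring lra.

Import Order.TTheory GRing.Theory Num.Theory.
Local Open Scope ring_scope.

(* tau_omega(P) arises from a nonzero left multiple A = B P in O by scaling
   with a nonzero element of K(q,M) and substituting q -> omega q; the
   substitution does not change which coefficients vanish.  Clearing
   denominators turns the scaled multiple into an identity d A' = C P in W
   with 0 != d in K(q)[M], and multiplying by d only translates the Newton
   polygon vertically.  Since L M = q M L merely rescales coefficients by
   powers of q, on a supporting line of slope s the leftmost (resp. rightmost)
   exponent pairs of C and of P add up to an exponent pair of C P whose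
   coefficient cannot cancel; hence every edge slope of P is one of C P. *)

Section FractionRepr.
Local Open Scope quotient_scope.

Lemma tofrac_numden {R : idomainType} (f : {fraction R}) :
  fden f != 0 /\ f = tofrac (fnum f) / tofrac (fden f).
Proof.
rewrite /fnum /fden; split; first exact: denom_ratioP.
apply/(@mulIf _ (tofrac (frac (repr f)).2)); first by rewrite tofrac_eq0 denom_ratioP.
rewrite mulfVK ?tofrac_eq0 ?denom_ratioP // -{1}[f]reprK.
case: (repr f) => [[n d] /= hd]; unlock tofrac.
transitivity (\pi_{fraction R} (FracField.mulf (@mkRatio _ (n, d) hd) (Ratio d 1))).
  by rewrite FracField.pi_mul.
apply/eqmodP; rewrite /= FracField.equivfE /FracField.mulf /=.
by rewrite !numden_Ratio ?oner_eq0 ?mulf_neq0 ?oner_eq0 // !mulr1 mulrC.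
Qed.

End FractionRepr.

Lemma common_denominator {R : idomainType} (B : {poly {fraction R}}) :
  exists (d : R) (C : {poly R}), d != 0 /\ map_poly (@tofrac R) C = tofrac d *: B.
Proof.
pose n := size B; pose d := \prod_(i < n) fden B`_i.
have den_neq0 i : fden B`_i != 0 by have [] := tofrac_numden B`_i.
exists d, (\poly_(i < n) (fnum B`_i * \prod_(j < n | val j != i) fden B`_j)).
split; first by apply/prodf_neq0 => i _; apply: den_neq0.
apply/polyP => i; rewrite coef_map_id0 ?rmorph0 // coef_poly coefZ.
case: (ltnP i n) => hi; last by rewrite tofrac0 nth_default ?mulr0.
rewrite /d [in RHS](bigD1 (Ordinal hi)) //=.
have [_ defBi] := tofrac_numden B`_i.
rewrite !rmorphM /= [X in _ = _ * X]defBi [RHS]mulrAC [_ * (_ / _)]mulrC.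
by rewrite divfK ?tofrac_eq0.
Qed.

Lemma natQD (m n : nat) : (m + n)%N%:Q = m%:Q + n%:Q.
Proof. by rewrite PoszD intrD. Qed.

Lemma natQ_lt (m n : nat) : (m%:Q < n%:Q) = (m < n)%N.
Proof. by rewrite ltr_int ltz_nat. Qed.

Lemma natQ_le (m n : nat) : (m%:Q <= n%:Q) = (m <= n)%N.
Proof. by rewrite ler_int lez_nat. Qed.

Lemma coef_comp_polyZX (R : comNzRingType) (c : R) (p : {poly R}) n :
  (p \Po (c *: 'X))`_n = c ^+ n * p`_n.
Proof.
rewrite coef_comp_poly.
under eq_bigr => i _ do rewrite exprZn coefZ coefXn.
case: (ltnP n (size p)) => hn.
  rewrite (bigD1 (Ordinal hn)) //= eqxx mulr1 big1 ?addr0 1?mulrC // => -[i hi] /=.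
  by rewrite -val_eqE /= eq_sym => /negbTE ->; rewrite !mulr0.
rewrite big1 ?nth_default ?mulr0 // => -[i hi] _ /=.
by case: eqP => [e|]; [move: hi; rewrite -e ltnNge hn | rewrite !mulr0].
Qed.

Lemma coef_neq0_lt_size (R : nzSemiRingType) (p : {poly R}) i :
  p`_i != 0 -> (i < size p)%N.
Proof. by apply: contraNT; rewrite -leqNgt => /(nth_default 0) ->. Qed.

Section PolyOrder.
Context {R : idomainType}.
Implicit Types (p r : {poly R}) (x y : rat).

Definition order_ge x p := forall b : nat, b%:Q < x -> p`_b = 0.
Definition order_gt x p := forall b : nat, b%:Q <= x -> p`_b = 0.

(* The 'X-adic valuation, with junk value [size p] at [p = 0]. *)
Definition lowest p := find (fun c => c != 0) p.

Lemma coef_lowest {p} : p != 0 -> p`_(lowest p) != 0.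
Proof.
move=> p_neq0; have : has (fun c => c != 0) p.
  apply/hasP; exists (lead_coef p); rewrite ?lead_coef_eq0 //.
  by rewrite lead_coefE mem_nth // prednK // lt0n size_poly_eq0.
exact: nth_find.
Qed.

Lemma order_ge_lowest p : order_ge (lowest p)%:Q p.
Proof. by move=> b; rewrite natQ_lt => /(before_find 0) /negbFE /eqP. Qed.

Lemma order_ge_le_lowest {x p} : p != 0 -> order_ge x p -> x <= (lowest p)%:Q.
Proof.
move=> p_neq0 hp; rewrite leNgt; apply/negP => /hp /eqP.
exact/negP/coef_lowest.
Qed.

Lemma order_geW {x y p} : order_ge x p -> y <= x -> order_ge y p.
Proof. by move=> hp yx b hb; apply: hp; lra. Qed.

Lemma order_ge0 x : order_ge x 0.
Proof. by move=> b _; rewrite coef0. Qed.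

Lemma order_geD {x p r} : order_ge x p -> order_ge x r -> order_ge x (p + r).
Proof. by move=> hp hr b hb; rewrite coefD hp ?hr ?addr0. Qed.

Lemma order_geM {x y p r} : order_ge x p -> order_ge y r -> order_ge (x + y) (p * r).
Proof.
move=> hp hr b hb; rewrite coefM big1 // => -[j /=]; rewrite ltnS => jb _.
case: (ltP j%:Q x) => hj; first by rewrite hp ?mul0r.
by rewrite hr ?mulr0 //; move: hb; rewrite -{1}(subnK jb) natQD; lra.
Qed.

Lemma order_gtMl {x y p r} : order_gt x p -> order_ge y r -> order_gt (x + y) (p * r).
Proof.
move=> hp hr b hb; rewrite coefM big1 // => -[j /=]; rewrite ltnS => jb _.
case: (leP j%:Q x) => hj; first by rewrite hp ?mul0r.
by rewrite hr ?mulr0 //; move: hb; rewrite -{1}(subnK jb) natQD; lra.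
Qed.

Lemma order_gtMr {x y p r} : order_ge x p -> order_gt y r -> order_gt (x + y) (p * r).
Proof. by move=> hp hr; rewrite mulrC addrC; apply: order_gtMl. Qed.

Lemma coefM_order {n k : nat} {p r} : order_ge n%:Q p -> order_ge k%:Q r ->
  (p * r)`_(n + k) = p`_n * r`_k.
Proof.
move=> hp hr; rewrite coefM (bigD1 (Ordinal (leq_addr k n : n < (n + k).+1)%N)) //=.
rewrite addKn big1 ?addr0 // => -[j /= jnk]; rewrite -val_eqE /=.
case: ltngtP => // [jn|nj] _; first by rewrite hp ?natQ_lt ?mul0r.
by rewrite hr ?mulr0 // natQ_lt -(ltn_add2l j) subnKC ?ltn_add2r // -ltnS.
Qed.

Lemma lowest_le {p b} : p`_b != 0 -> (lowest p <= b)%N.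
Proof. by rewrite leqNgt; apply: contra => /(before_find 0) /negbFE. Qed.

Lemma lowestM {p r} : p != 0 -> r != 0 -> lowest (p * r) = (lowest p + lowest r)%N.
Proof.
move=> p_neq0 r_neq0; apply/eqP; rewrite eqn_leq; apply/andP; split.
  apply: lowest_le; rewrite coefM_order; try exact: order_ge_lowest.
  by apply: mulf_neq0; apply: coef_lowest.
rewrite -natQ_le natQD; apply: order_ge_le_lowest; first exact: mulf_neq0.
exact: order_geM (order_ge_lowest p) (order_ge_lowest r).
Qed.

Lemma order_ge_comp_polyZX {x p} (c : R) : order_ge x p -> order_ge x (p \Po (c *: 'X)).
Proof. by move=> hp b hb; rewrite coef_comp_polyZX hp ?mulr0. Qed.

Lemma order_gt_comp_polyZX {x p} (c : R) : order_gt x p -> order_gt x (p \Po (c *: 'X)).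
Proof. by move=> hp b hb; rewrite coef_comp_polyZX hp ?mulr0. Qed.

End PolyOrder.

Section NewtonLine.
Context {R : idomainType}.
Implicit Types (Q : {poly {poly R}}) (s x : rat).

Definition above_line s x Q := forall a : nat, order_ge (x + s * a%:Q) Q`_a.

Definition on_line s x Q (a b : nat) := Q`_a`_b != 0 /\ b%:Q = x + s * a%:Q.

Definition has_slope s Q := exists (x : rat) (a1 b1 a2 b2 : nat),
  [/\ (a1 < a2)%N, above_line s x Q, on_line s x Q a1 b1 & on_line s x Q a2 b2].

Lemma coef2_neq0 {Q a b} : Q`_a`_b != 0 -> Q`_a != 0.
Proof. by apply: contraNneq => ->; rewrite coef0. Qed.

Lemma on_line_lowest {s x Q a b} : above_line s x Q -> on_line s x Q a b ->
  b = lowest Q`_a.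
Proof.
move=> hQ [nz eb]; apply/eqP; rewrite eqn_leq lowest_le // andbT -natQ_le eb.
exact: order_ge_le_lowest (coef2_neq0 nz) (hQ a).
Qed.

Lemma supporting_line s {Q} : Q != 0 ->
  exists x a b, above_line s x Q /\ on_line s x Q a b.
Proof.
move=> Q_neq0; have top : ((size Q).-1 < size Q)%N.
  by rewrite prednK // lt0n size_poly_eq0.
have top_neq0 : Q`_(Ordinal top) != 0 by rewrite -lead_coefE lead_coef_eq0.
pose F (i : 'I_(size Q)) : rat := (lowest Q`_i)%:Q - s * i%:Q.
case: (@arg_minP _ _ _ _ (fun i : 'I_(size Q) => Q`_i != 0) F top_neq0) => a a_neq0 a_min.
exists (F a), a, (lowest Q`_a); split; last by split; [exact: coef_lowest | rewrite /F subrK].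
move=> k; case: (ltnP k (size Q)) => [kQ|Qk]; last by rewrite nth_default //; apply: order_ge0.
have [->|k_neq0] := eqVneq Q`_k 0; first exact: order_ge0.
apply: (order_geW (order_ge_lowest Q`_k)).
by have := a_min (Ordinal kQ) k_neq0; rewrite /F /=; lra.
Qed.

Definition touches s x Q a := has (fun b : nat =>
  (Q`_a`_b != 0) && (b%:Q == x + s * a%:Q)) (iota 0 (size Q`_a)).

Lemma touchesP s x Q a : reflect (exists b, on_line s x Q a b) (touches s x Q a).
Proof.
apply: (iffP hasP) => [[b _ /andP [nz /eqP eb]]|[b [nz eb]]]; first by exists b.
by exists b; rewrite ?mem_iota ?coef_neq0_lt_size // nz eb eqxx.
Qed.

Lemma order_gt_untouched {s x Q a} : above_line s x Q -> ~~ touches s x Q a ->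
  order_gt (x + s * a%:Q) Q`_a.
Proof.
move=> hQ untouched b hb; have [hlt|hge] := ltP b%:Q (x + s * a%:Q); first exact: hQ.
apply/eqP; apply: contraNT untouched => nz; apply/touchesP; exists b; split=> //.
lra.
Qed.

Lemma first_contact {s x Q a0 b0} : above_line s x Q -> on_line s x Q a0 b0 ->
  exists a b, [/\ (a <= a0)%N, on_line s x Q a b &
    forall k, (k < a)%N -> order_gt (x + s * k%:Q) Q`_k].
Proof.
move=> hQ h0; have touch0 : touches s x Q a0 by apply/touchesP; exists b0.
have [a /touchesP [b hab] a_min] := ex_minnP (ex_intro _ a0 touch0).
exists a, b; split=> [||k ka]; [exact: a_min | by [] |].
by apply: order_gt_untouched => //; apply: contraTN ka => /a_min; rewrite -leqNgt.
Qed.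

Lemma last_contact {s x Q a0 b0} : above_line s x Q -> on_line s x Q a0 b0 ->
  exists a b, [/\ (a0 <= a)%N, on_line s x Q a b &
    forall k, (a < k)%N -> order_gt (x + s * k%:Q) Q`_k].
Proof.
move=> hQ h0; have touch0 : touches s x Q a0 by apply/touchesP; exists b0.
have bounded k : touches s x Q k -> (k <= size Q)%N.
  by case/touchesP=> b [nz _]; apply/ltnW/coef_neq0_lt_size/(coef2_neq0 nz).
have [a /touchesP [b hab] a_max] := ex_maxnP (ex_intro _ a0 touch0) bounded.
exists a, b; split=> [||k ka]; [exact: a_max | by [] |].
by apply: order_gt_untouched => //; apply: contraTN ka => /a_max; rewrite -leqNgt.
Qed.

Lemma has_slope_eq_support {s Q Q'} :
  (forall a b, (Q'`_a`_b == 0) = (Q`_a`_b == 0)) -> has_slope s Q -> has_slope s Q'.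
Proof.
move=> supp [x [a1 [b1 [a2 [b2 [a12 hQ [nz1 e1] [nz2 e2]]]]]]].
exists x, a1, b1, a2, b2; split; rewrite /on_line ?supp //.
by move=> a b hb; apply/eqP; rewrite supp; apply/eqP/hQ.
Qed.

Lemma has_slope_scale {s} {d : {poly R}} {Q} : d != 0 ->
  has_slope s (d *: Q) -> has_slope s Q.
Proof.
move=> d_neq0 [x [a1 [b1 [a2 [b2 [a12 hdQ h1 h2]]]]]].
pose v := (lowest d)%:Q.
have hQ : above_line s (x - v) Q.
  move=> a; have [->|Qa_neq0] := eqVneq Q`_a 0; first exact: order_ge0.
  have dQa_neq0 : (d *: Q)`_a != 0 by rewrite coefZ mulf_neq0.
  apply: (order_geW (order_ge_lowest Q`_a)).
  by have := order_ge_le_lowest dQa_neq0 (hdQ a); rewrite coefZ lowestM // natQD /v; lra.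
have on_lineQ a b : on_line s x (d *: Q) a b -> on_line s (x - v) Q a (lowest Q`_a).
  move=> hab; have Qa_neq0 : Q`_a != 0.
    by apply: contraNneq hab.1 => Qa0; rewrite coefZ Qa0 mulr0 coef0.
  split; first exact: coef_lowest.
  have := hab.2; rewrite (on_line_lowest hdQ hab) coefZ lowestM // natQD /v; lra.
exists (x - v), a1, (lowest Q`_a1), a2, (lowest Q`_a2).
by split; [| | exact: on_lineQ h1 | exact: on_lineQ h2].
Qed.

End NewtonLine.

Section TwistedProduct.
Context {R : idomainType}.
Variable q : R.
Implicit Types (C P : {poly {poly R}}) (p : {poly R}) (s x : rat).

(* L^i c(M) = c(q^i M) L^i *)
Definition twist (i : nat) p := p \Po (q ^+ i *: 'X).

Definition qmul C P : {poly {poly R}} :=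
  \sum_(i < size C) \sum_(j < size P) (C`_i * twist i P`_j) *: 'X^(i + j).

Lemma qmul0 P : qmul 0 P = 0.
Proof. by rewrite /qmul size_poly0 big_ord0. Qed.

Lemma coef_twist i p b : (twist i p)`_b = q ^+ (i * b) * p`_b.
Proof. by rewrite coef_comp_polyZX exprM. Qed.

Lemma coef_qmul C P k : (qmul C P)`_k =
  \sum_(i < size C) \sum_(j < size P) (C`_i * twist i P`_j) *+ (k == i + j)%N.
Proof.
rewrite coef_sum; apply: eq_bigr => i _; rewrite coef_sum; apply: eq_bigr => j _.
by rewrite coefZ coefXn mulr_natr.
Qed.

Lemma above_line_qmul {s xC xP C P} : above_line s xC C -> above_line s xP P ->
  above_line s (xC + xP) (qmul C P).
Proof.
move=> hC hP k; rewrite coef_qmul.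
apply: (big_ind (order_ge _)) => [|p r|i _]; [exact: order_ge0 | exact: order_geD |].
apply: (big_ind (order_ge _)) => [|p r|j _]; [exact: order_ge0 | exact: order_geD |].
case: eqP => [->|_]; last by rewrite mulr0n; apply: order_ge0.
apply: (order_geW (order_geM (hC i) (order_ge_comp_polyZX _ (hP j)))).
by rewrite natQD; lra.
Qed.

Lemma coef_qmul_single {C P i1 j1 b} : (i1 < size C)%N -> (j1 < size P)%N ->
  (forall i j, (i + j = i1 + j1)%N -> i != i1 -> (C`_i * twist i P`_j)`_b = 0) ->
  (qmul C P)`_(i1 + j1)`_b = (C`_i1 * twist i1 P`_j1)`_b.
Proof.
move=> i1C j1P vanish.
rewrite coef_qmul coef_sum (bigD1 (Ordinal i1C)) //= [X in _ + X]big1 => [|i ni].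
  rewrite addr0 coef_sum (bigD1 (Ordinal j1P)) //= eqxx mulr1n.
  rewrite [X in _ + X]big1 ?addr0 // => j; rewrite -val_eqE /= eq_sym => nj.
  by rewrite eqn_add2l (negbTE nj) mulr0n coef0.
rewrite coef_sum big1 // => j _; rewrite coefMn; case: eqP => [e|_]; last by rewrite mulr0n.
by rewrite mulr1n; apply: vanish => //; rewrite -val_eqE in ni.
Qed.

Hypothesis q_neq0 : q != 0.

Lemma qmul_contact {s xC xP C P i1 b1 j1 c1} :
  above_line s xC C -> above_line s xP P ->
  on_line s xC C i1 b1 -> on_line s xP P j1 c1 ->
  (forall i j, (i + j = i1 + j1)%N -> i != i1 ->
     order_gt (xC + s * i%:Q) C`_i \/ order_gt (xP + s * j%:Q) P`_j) ->
  on_line s (xC + xP) (qmul C P) (i1 + j1) (b1 + c1).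
Proof.
move=> hC hP [nzC eb1] [nzP ec1] extreme.
split; last by rewrite !natQD eb1 ec1; ring.
rewrite coef_qmul_single ?coef_neq0_lt_size ?(coef2_neq0 nzC) ?(coef2_neq0 nzP) //.
  rewrite coefM_order ?coef_twist; first by rewrite !mulf_neq0 ?expf_neq0.
    by rewrite eb1; apply: hC.
  by rewrite ec1; apply: order_ge_comp_polyZX.
move=> i j eij ni; have bound : (b1 + c1)%:Q <= (xC + s * i%:Q) + (xP + s * j%:Q).
  have := congr1 (fun n : nat => n%:Q) eij; rewrite /= !natQD eb1 ec1 => e.
  by rewrite addrACA [leRHS]addrACA -!mulrDr e.
case: (extreme i j eij ni) => [Ci|Pj].
  exact: (order_gtMl Ci (order_ge_comp_polyZX _ (hP j))).
exact: (order_gtMr (hC i) (order_gt_comp_polyZX _ Pj)).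
Qed.

Lemma has_slope_qmul s C P : C != 0 -> has_slope s P -> has_slope s (qmul C P).
Proof.
move=> C_neq0 [xP [a1 [b1 [a2 [b2 [a12 hP h1 h2]]]]]].
have [xC [i0 [c0 [hC h0]]]] := supporting_line s C_neq0.
have [i1 [d1 [i1_i0 C_i1 first_C]]] := first_contact hC h0.
have [i2 [d2 [i0_i2 C_i2 last_C]]] := last_contact hC h0.
have [j1 [e1 [j1_a1 P_j1 first_P]]] := first_contact hP h1.
have [j2 [e2 [a2_j2 P_j2 last_P]]] := last_contact hP h2.
exists (xC + xP), (i1 + j1)%N, (d1 + e1)%N, (i2 + j2)%N, (d2 + e2)%N; split.
- apply: (@leq_ltn_trans (i2 + j1)); first by rewrite leq_add2r (leq_trans i1_i0).
  by rewrite ltn_add2l (leq_ltn_trans j1_a1) // (leq_trans a12).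
- exact: above_line_qmul.
- apply: qmul_contact => // i j eij; case: ltngtP => // [ii1|i1i] _; first by left; apply: first_C.
  by right; apply: first_P; rewrite -(ltn_add2l i) eij ltn_add2r.
- apply: qmul_contact => // i j eij; case: ltngtP => // [ii2|i2i] _; last by left; apply: last_C.
  by right; apply: last_P; rewrite -(ltn_add2l i) eij ltn_add2r.
Qed.

End TwistedProduct.

Section WeylAlgebra.
Variable K : fieldType.
Local Notation Kq := (Kq K).
Local Notation KqM := (KqM K).
Local Notation qK := (qK K).

Lemma qK_neq0 : qK != 0.
Proof. by rewrite tofrac_eq0 polyX_eq0. Qed.

Lemma sigma_pow_tofrac i (p : {poly Kq}) : sigma_pow i (tofrac p) = tofrac (twist qK i p).
Proof.
have [den_neq0 defp] := tofrac_numden (tofrac p).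
have num_p : fnum (tofrac p) = p * fden (tofrac p).
  by apply/eqP; rewrite -tofrac_eq rmorphM /= {2}defp mulfVK ?tofrac_eq0.
have twist_den_neq0 : twist qK i (fden (tofrac p)) != 0.
  by rewrite comp_poly2_eq0 // size_scale ?size_polyX // expf_neq0 ?qK_neq0.
by rewrite /sigma_pow num_p comp_polyM rmorphM /= mulfK ?tofrac_eq0.
Qed.

Lemma embedW_inj : injective (@embedW K).
Proof. by apply: map_inj_poly => [x y /eqP|]; rewrite ?tofrac_eq ?rmorph0 // => /eqP. Qed.

Lemma embedW_qmul (C P : {poly {poly Kq}}) :
  embedW (qmul qK C P) = omul (embedW C) (embedW P).
Proof.
have size_embedW (A : {poly {poly Kq}}) : size (embedW A) = size A.
  by apply: size_map_inj_poly => [x y /eqP|]; rewrite ?tofrac_eq ?rmorph0 // => /eqP.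
rewrite /omul !size_embedW /qmul /embedW !raddf_sum; apply: eq_bigr => i _.
rewrite raddf_sum; apply: eq_bigr => j _.
by rewrite /= map_polyZ map_polyXn !coef_map /= rmorphM /= sigma_pow_tofrac.
Qed.

Lemma omulZ (u : KqM) (A B : {poly KqM}) : omul (u *: A) B = u *: omul A B.
Proof.
have [->|u_neq0] := eqVneq u 0; first by rewrite !scale0r /omul size_poly0 big_ord0.
rewrite /omul size_scale // scaler_sumr; apply: eq_bigr => i _.
by rewrite scaler_sumr; apply: eq_bigr => j _; rewrite coefZ scalerA -mulrA.
Qed.

Lemma left_multiple_in_W (P A : {poly {poly Kq}}) (B : {poly KqM}) :
  embedW A = omul B (embedW P) ->
  exists (d : {poly Kq}) (C : {poly {poly Kq}}), d != 0 /\ d *: A = qmul qK C P.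
Proof.
move=> defA; have [d [C [d_neq0 defC]]] := common_denominator B.
exists d, C; split=> //; apply: embedW_inj.
have embedWC : embedW C = tofrac d *: B by [].
rewrite embedW_qmul embedWC omulZ -defA.
exact: map_polyZ.
Qed.

Lemma subst_q_eq0 (w : K) (f : Kq) : w != 0 -> (subst_q w f == 0) = (f == 0).
Proof.
move=> w_neq0; have [den_neq0 deff] := tofrac_numden f.
have sizewX : size (w *: ('X : {poly K})) = 2 by rewrite size_scale ?size_polyX.
rewrite /subst_q mulf_eq0 invr_eq0 !tofrac_eq0 !comp_poly2_eq0 // (negbTE den_neq0) orbF.
by rewrite {2}deff mulf_eq0 invr_eq0 !tofrac_eq0 (negbTE den_neq0) orbF.
Qed.

Lemma slope_ofE s (Q : {poly {poly Kq}}) : slope_of Q s <-> has_slope s Q.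
Proof.
split=> [[a1 [b1 [a2 [b2 [a12 nz1 nz2 e2 low]]]]]|[x [a1 [b1 [a2 [b2]]]]]].
  exists (b1%:Q - s * a1%:Q), a1, b1, a2, b2; split=> [//| | |].
  - move=> a b hb; apply/eqP; apply: contraTT hb => nz; rewrite -leNgt.
    by have := low a b nz; lra.
  - by split; [exact: nz1 | rewrite subrK].
  - by split; [exact: nz2 | rewrite e2; ring].
move=> [a12 above [nz1 e1] [nz2 e2]]; exists a1, b1, a2, b2.
split=> [//| | | |a b nz]; [exact: nz1 | exact: nz2 | by rewrite e1 e2; ring |].
rewrite leNgt; apply: contra nz => hb; apply/eqP/above; lra.
Qed.

End WeylAlgebra.

Theorem proposition2 (K : fieldType)
  (charK0 : [pchar K] =i pred0)
  (roots_unity : forall n : nat, (0 < n)%N -> exists z : K, n.-primitive_root z)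
  (P : {poly {poly Kq K}}) (hP : P != 0)
  (m : nat) (hm : (0 < m)%N) (w : K) (hw : w ^+ m = 1)
  (T : {poly {poly Kq K}}) (hT : is_tau m w P T) :
  WopMm m T /\ (forall s : rat, slope_of P s -> slope_of T s).
Proof.
case: hT => A [u [A' [[A_neq0 [B defA] _ _] [u_neq0 defA' A'_Mm _ ->]]]].
have w_neq0 : w != 0.
  by apply: contra_eq_neq hw => ->; rewrite expr0n gtn_eqF // eq_sym oner_eq0.
have coef_T a b : (subst_q_op w A')`_a`_b = subst_q w A'`_a`_b.
  by rewrite !coef_map_id0 //= ?map_poly0 //; apply/eqP; rewrite subst_q_eq0.
have supp_T a b : ((subst_q_op w A')`_a`_b == 0) = (A'`_a`_b == 0).
  by rewrite coef_T subst_q_eq0.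
have A'_neq0 : A' != 0.
  apply: contraNneq A_neq0 => A'0; move: defA'; rewrite A'0 /embedW map_poly0.
  by move=> /esym/eqP; rewrite scale_poly_eq0 (negbTE u_neq0).
split=> [j i i_Mm|s /slope_ofE P_s]; first by apply/eqP; rewrite supp_T A'_Mm.
apply/slope_ofE/(has_slope_eq_support supp_T).
have [|d [C [d_neq0 defdA']]] := @left_multiple_in_W K P A' (u *: B).
  by rewrite defA' defA omulZ.
have C_neq0 : C != 0.
  apply: contraNneq A'_neq0 => C0; move: defdA'; rewrite C0 qmul0 => /eqP.
  by rewrite scale_poly_eq0 (negbTE d_neq0).
apply: (has_slope_scale d_neq0); rewrite defdA'.
by apply: has_slope_qmul C_neq0 P_s; apply: qK_neq0.
Qed.
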